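(* Let $(X,d)$ be a bounded metric space and $\lambda\ge0$. Let $\ell,k:X\to[0,+\infty)$ be lower semicontinuous functions with $\inf_X\ell=\inf_Xk=0$, and let $u,v:X\to\mathbb{R}$ be the Perron solutions of $(\mathcal{G}_\lambda)$ associated with $\ell$ and $k$, respectively. Then for every $\rho>0$, \[v(x)-u(x)\le(\rho+\|k-\ell\|_\infty)\,\mathrm{diam}(X)+\|k-\ell\|_\infty\frac{u(x)}{\rho}\quad\text{for all }x\in X.\]
   Context: $\mathrm{diam}(X)=\sup\{d(x,y):x,y\in X\}$; $\|f\|_\infty=\sup_X|f|$. Global slope: $G[u](x)=\sup_{y\neq x}\frac{(u(x)-u(y))_+}{d(x,y)}$ if $u(x)<+\infty$, $G[u](x)=+\infty$ otherwise. A solution of $(\mathcal{G}_\lambda)$ with data $\ell$ is a lower semicontinuous $u$ with $\inf_Xu=0$ and $\lambda u+G[u]=\ell$ on $X$; the Perron solution is the solution that is pointwise maximal among all solutions. *)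

From HB Require Import structures.
From mathcomp Require Import all_boot all_order all_algebra.
From mathcomp Require Import all_classical all_reals ereal.
Set Implicit Arguments. Unset Strict Implicit. Unset Printing Implicit Defensive.
Import Order.TTheory GRing.Theory Num.Theory.
Local Open Scope classical_set_scope.
Local Open Scope ring_scope.

Definition is_metric (R : realType) (T : Type) (d : T -> T -> R) : Prop :=
  (forall x y, 0 <= d x y) /\
  (forall x y, d x y = 0 <-> x = y) /\
  (forall x y, d x y = d y x) /\
  (forall x y z, d x z <= d x y + d y z).

Definition diam (R : realType) (T : Type) (d : T -> T -> R) : \bar R :=
  ereal_sup [set (d p.1 p.2)%:E | p in [set: T * T]].

Definition sup_norm (R : realType) (T : Type) (f : T -> R) : \bar R :=
  ereal_sup [set `|f x|%:E | x in [set: T]].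

Definition einf (R : realType) (T : Type) (f : T -> R) : \bar R :=
  ereal_inf [set (f x)%:E | x in [set: T]].

Definition lsc (R : realType) (T : Type) (d : T -> T -> R) (f : T -> R) : Prop :=
  forall x (e : R), 0 < e -> exists2 delta : R, 0 < delta &
    forall y, d x y < delta -> f x - e < f y.

(* The value 0 is added to the set so that
   the supremum over an empty index set (X = {x}) is 0 rather than -oo; this
   does not change anything otherwise since all terms are >= 0. *)
Definition global_slope (R : realType) (T : Type) (d : T -> T -> R)
    (u : T -> R) (x : T) : \bar R :=
  ereal_sup (0%E |` [set ((Num.max (u x - u y) 0) / d x y)%:E | y in ~` [set x]]).

Definition is_solution (R : realType) (T : Type) (d : T -> T -> R)
    (lam : R) (l u : T -> R) : Prop :=
  lsc d u /\ einf u = 0%E /\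
  forall x, ((lam * u x)%:E + global_slope d u x)%E = (l x)%:E.

Definition is_perron_solution (R : realType) (T : Type) (d : T -> T -> R)
    (lam : R) (l u : T -> R) : Prop :=
  is_solution d lam l u /\
  forall w, is_solution d lam l w -> forall x, w x <= u x.

(* Let m = ||k - l||_oo, D = diam X and a = rho / (rho + m).  Where a v - rho D
   is positive, v <= k D forces k > rho + m, and there the rescaled datum a k
   lies below l; hence w = max (0, a v - rho D) is a subsolution with data l.
   By Perron's method the Perron solution u dominates every subsolution: the
   supremum of all subsolutions is a subsolution, and it is a solution because
   wherever its slope falls strictly short of l - lam u, adding a small cone
   there yields a larger subsolution.  So a v - rho D <= u, which rearranges to
   the estimate. *)

From HB Require Import structures.
From mathcomp Require Import all_boot all_order all_algebra.
From mathcomp Require Import all_classical all_reals ereal.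
From mathcomp Require Import lra.
Import Order.TTheory GRing.Theory Num.Theory.
Set Implicit Arguments. Unset Strict Implicit. Unset Printing Implicit Defensive.
Local Open Scope classical_set_scope.
Local Open Scope ring_scope.

Section MetricSlope.
Variables (R : realType) (T : Type) (d : T -> T -> R).

Lemma lsc_max (f g : T -> R) :
  lsc d f -> lsc d g -> lsc d (fun x => Num.max (f x) (g x)).
Proof.
move=> hf hg x e e0; have [a a0 ha] := hf x e e0; have [b b0 hb] := hg x e e0.
exists (Num.min a b); first by rewrite lt_min a0 b0.
move=> y; rewrite lt_min => /andP[/ha fy /hb gy].
by rewrite lt_max; case: (leP (f x) (g x)) => fg; apply/orP; [right|left]; lra.
Qed.

Lemma lsc_affine (f : T -> R) (a c : R) :
  0 < a -> lsc d f -> lsc d (fun x => a * f x - c).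
Proof.
move=> a0 hf x e e0; have [b b0 hb] := hf x (e / a) (divr_gt0 e0 a0).
exists b => // y /hb fy; have : a * (f x - e / a) < a * f y by rewrite ltr_pM2l.
by rewrite mulrBr mulrCA mulfV ?mulr1 ?gt_eqF //; lra.
Qed.

Hypothesis dm : is_metric d.

Lemma metric_ge0 x y : 0 <= d x y. Proof. by case: dm. Qed.

Lemma metric_xx x : d x x = 0. Proof. by case: dm => _ [h _]; apply/h. Qed.

Lemma metric_gt0 x y : y <> x -> 0 < d x y.
Proof.
move=> yx; rewrite lt_neqAle metric_ge0 andbT; apply/eqP => /esym dxy.
by case: dm => _ [hd _]; apply: yx; symmetry; apply/hd.
Qed.

Lemma metric_triangle x y z : d x z <= d x y + d y z.
Proof. by case: dm => _ [_ []]. Qed.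

Lemma lipschitz_lsc (f : T -> R) (L : R) :
  0 <= L -> (forall x y, f x - f y <= L * d x y) -> lsc d f.
Proof.
move=> L0 hf x e e0; exists (e / (L + 1)); first by apply: divr_gt0 => //; lra.
move=> y dxy; have : L * d x y <= L * (e / (L + 1)).
  by apply: ler_wpM2l => //; exact: ltW.
have : e / (L + 1) * (L + 1) = e by rewrite mulfVK //; lra.
have := hf x y; have := metric_ge0 x y; nra.
Qed.

Lemma global_slope_ge0 (u : T -> R) x : (0 <= global_slope d u x)%E.
Proof. by apply: ereal_sup_ubound; left. Qed.

Lemma global_slope_leP (u : T -> R) x (c : R) : 0 <= c ->
  (global_slope d u x <= c%:E)%E <-> forall y, u x - u y <= c * d x y.
Proof.
move=> c0; split=> [hG y|hu].
  have [->|yx] := pselect (y = x); first by rewrite metric_xx subrr mulr0.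
  have : ((Num.max (u x - u y) 0 / d x y)%:E <= c%:E)%E.
    by apply: le_trans hG; apply: ereal_sup_ubound; right; exists y.
  rewrite lee_fin ler_pdivrMr; last exact: metric_gt0.
  by apply: le_trans; rewrite le_max lexx.
apply: ge_ereal_sup => _ [->|[y /= yx <-]]; first by rewrite lee_fin.
rewrite lee_fin ler_pdivrMr; last exact: metric_gt0.
by rewrite ge_max hu mulr_ge0 ?metric_ge0.
Qed.

End MetricSlope.

Lemma einf0P (R : realType) (T : Type) (f : T -> R) : einf f = 0%E <->
  (forall y, 0 <= f y) /\ (forall e : R, 0 < e -> exists y, f y < e).
Proof.
split=> [f0|[f_ge0 f_small]].
  split=> [y|e e0].
    have : (einf f <= (f y)%:E)%E by apply: ereal_inf_lbound; exists y.
    by rewrite f0 lee_fin.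
  have : (einf f < e%:E)%E by rewrite f0 lte_fin.
  by case/ereal_inf_lt => _ [y _ <-]; rewrite lte_fin; exists y.
apply/eqP; rewrite eq_le; apply/andP; split.
  apply/lee_addgt0Pr => e e0; rewrite add0e.
  have [y fy] := f_small e e0; apply: (@le_trans _ _ (f y)%:E).
    by apply: ereal_inf_lbound; exists y.
  by rewrite lee_fin ltW.
by apply: le_ereal_inf_tmp => _ [y _ <-]; rewrite lee_fin.
Qed.

Lemma rescaled_data_le (R : realFieldType) (rho m D k l v : R) :
  0 < rho -> 0 <= m -> 0 <= D -> k - l <= m -> v <= k * D ->
  rho * D < rho / (rho + m) * v -> rho / (rho + m) * k <= l.
Proof.
move=> rho0 m0 D0 klm vkD hv; have rm : 0 < rho + m by lra.
have rmK : rho / (rho + m) * (rho + m) = rho by rewrite mulfVK ?gt_eqF.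
have a0 : 0 < rho / (rho + m) by exact: divr_gt0.
have rho_lt_ak : rho < rho / (rho + m) * k.
  rewrite ltNge; apply/negP => akr.
  have : rho / (rho + m) * v <= rho / (rho + m) * (k * D) by rewrite ler_pM2l.
  have : rho / (rho + m) * k * D <= rho * D by rewrite ler_wpM2r.
  lra.
have : rho * (rho + m) < rho * k.
  by rewrite -[in X in _ < X]rmK mulrAC ltr_pM2r.
rewrite ltr_pM2l // -(ler_pM2r rm) mulrAC rmK => rmk; nra.
Qed.

Section Subsolutions.
Variables (R : realType) (T : Type) (d : T -> T -> R) (lam : R).

Definition subsolution_at (l z : T -> R) (x : T) : Prop :=
  lam * z x <= l x /\ forall y, z x - z y <= (l x - lam * z x) * d x y.

Definition is_subsolution (l z : T -> R) : Prop :=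
  lsc d z /\ einf z = 0%E /\
  forall x, ((lam * z x)%:E + global_slope d z x <= (l x)%:E)%E.

Hypotheses (dm : is_metric d) (lam0 : 0 <= lam).

Lemma subsolution_atP (l z : T -> R) x :
  ((lam * z x)%:E + global_slope d z x <= (l x)%:E)%E <-> subsolution_at l z x.
Proof.
split=> [|[lz hz]].
  have := global_slope_ge0 d z x; have := global_slope_leP dm z x.
  case: (global_slope d z x) => [g| |] //= hG.
  rewrite -EFinD !lee_fin => g0 hz.
  have lz : lam * z x <= l x by lra.
  by split=> //; apply/(hG (l x - lam * z x)); rewrite ?lee_fin; lra.
have lxz : 0 <= l x - lam * z x by lra.
have /(leeD2l (lam * z x)%:E) := (global_slope_leP dm z x lxz).2 hz.
by rewrite -EFinD addrCA subrr addr0.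
Qed.

Lemma is_subsolutionP (l z : T -> R) : is_subsolution l z <->
  [/\ lsc d z, (forall y, 0 <= z y), (forall e : R, 0 < e -> exists y, z y < e)
    & forall x, subsolution_at l z x].
Proof.
split=> [[lz [/einf0P[z0 zsmall] hz]] | [lz z0 zsmall hz]].
  by split=> // x; apply/subsolution_atP.
by split; [|split] => [//||x]; [apply/einf0P | apply/subsolution_atP].
Qed.

Lemma solution_is_subsolution (l u : T -> R) :
  is_solution d lam l u -> is_subsolution l u.
Proof. by case=> lu [u0 hu]; split; [|split] => // x; rewrite hu. Qed.

Lemma solution_data_eq0 (l u : T -> R) x : is_solution d lam l u -> u x = 0 -> l x = 0.
Proof.
case=> _ [/einf0P[u_ge0 _] hu] ux0.
have : (global_slope d u x <= 0%:E)%E.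
  by apply/(global_slope_leP dm) => // y; rewrite ux0 mul0r sub0r oppr_le0.
have := global_slope_ge0 d u x; have := hu x; rewrite ux0 mulr0.
case: (global_slope d u x) => [g| |] //= [<-]; rewrite !lee_fin; lra.
Qed.

Lemma subsolution_at_max (l z1 z2 : T -> R) x :
  (z2 x <= z1 x -> subsolution_at l z1 x) ->
  (z1 x < z2 x -> subsolution_at l z2 x) ->
  subsolution_at l (fun y => Num.max (z1 y) (z2 y)) x.
Proof.
rewrite /subsolution_at => h1 h2.
case: (leP (z2 x) (z1 x)) => [/h1|/h2] [lz hz]; split=> // y; have := hz y.
  have : z1 y <= Num.max (z1 y) (z2 y) by rewrite le_max lexx.
  lra.
have : z2 y <= Num.max (z1 y) (z2 y) by rewrite le_max lexx orbT.
lra.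
Qed.

Lemma subsolution_at_scale (k l v : T -> R) (a c : R) x : 0 < a -> 0 <= c ->
  a * k x <= l x -> subsolution_at k v x ->
  subsolution_at l (fun y => a * v y - c) x.
Proof.
move=> a0 c0 akl [kv hv]; have lc : 0 <= lam * c by exact: mulr_ge0.
have akv : a * (lam * v x) <= a * k x by rewrite ler_pM2l.
split=> [|y]; first nra.
have : a * (v x - v y) <= a * ((k x - lam * v x) * d x y) by rewrite ler_pM2l.
have : a * (k x - lam * v x) * d x y <= (l x - lam * (a * v x - c)) * d x y.
  by apply: ler_wpM2r; [exact: metric_ge0 | nra].
nra.
Qed.

Lemma lipschitz_subsolution_at (l f : T -> R) (L : R) x : 0 <= L ->
  (forall y, f x - f y <= L * d x y) -> lam * f x + L <= l x ->
  subsolution_at l f x.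
Proof.
move=> L0 hf fl; split=> [|y]; first lra.
by apply: le_trans (hf y) _; apply: ler_wpM2r; [exact: metric_ge0 | lra].
Qed.

(* [c] keeps the region where [phi] is active away from the points where [U]
   is small, so that the infimum stays 0. *)
Lemma subsolution_max_lipschitz (l U phi : T -> R) (L c : R) : 0 <= L -> 0 < c ->
  is_subsolution l U -> (forall x y, phi x - phi y <= L * d x y) ->
  (forall y, U y < phi y -> lam * phi y + L <= l y /\ c <= U y) ->
  is_subsolution l (fun y => Num.max (U y) (phi y)).
Proof.
move=> L0 c0 /is_subsolutionP[lU U0 Usmall hU] hphi bump.
apply/is_subsolutionP; split=> [|y|e e0|x].
- exact: lsc_max lU (lipschitz_lsc dm L0 hphi).
- by rewrite le_max U0.
- have [y] : exists y, U y < Num.min e c by apply: Usmall; rewrite lt_min e0.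
  rewrite lt_min => /andP[Ue Uc]; exists y.
  by case: (ltP (U y) (phi y)) => [/bump[_]|_]; lra.
- apply: subsolution_at_max => [_|/bump[+ _]]; first exact: hU.
  exact: lipschitz_subsolution_at L0 (hphi x).
Qed.

Lemma subsolution_bump (l U : T -> R) x0 (g : R) : lsc d l -> is_subsolution l U ->
  0 < U x0 -> 0 <= g -> (forall y, U x0 - U y <= g * d x0 y) ->
  g + lam * U x0 < l x0 ->
  exists2 Z, is_subsolution l Z & U x0 < Z x0.
Proof.
move=> lscl hU Ux0 g0 hg gl.
pose eta := (l x0 - g - lam * U x0) / 3.
have eta0 : 0 < eta by apply: divr_gt0 => //; lra.
have eta3 : eta * 3 = l x0 - g - lam * U x0 by rewrite mulfVK.
have [r1 r10 l_near] := lscl x0 eta eta0.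
have [r2 r20 U_near] := hU.1 x0 (U x0 / 2) (divr_gt0 Ux0 (ltr0Sn _ 1)).
pose del := Num.min (eta / (lam + 1)) (Num.min r1 r2 * eta).
have lam1 : 0 < lam + 1 by have := lam0; lra.
have del0 : 0 < del.
  by rewrite lt_min divr_gt0 //= mulr_gt0 // lt_min r10 r20.
have lam_del : lam * del <= eta.
  have : del <= eta / (lam + 1) by rewrite ge_min lexx.
  by rewrite ler_pdivlMr; [nra | lra].
have del_r : del <= Num.min r1 r2 * eta by rewrite ge_min lexx orbT.
pose L := g + eta.
have L0 : 0 <= L by rewrite /L; lra.
(* The cone is active only within [min r1 r2] of [x0], where [l] exceeds
   [l x0 - eta] and [U] exceeds [U x0 / 2]. *)
pose phi y := U x0 + del - L * d x0 y.
have bump_near y : U y < phi y -> d x0 y < Num.min r1 r2.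
  move=> Uphi; rewrite -(ltr_pM2l eta0).
  by have := hg y; rewrite /phi /L in Uphi; nra.
exists (fun y => Num.max (U y) (phi y)); last first.
  by rewrite lt_max /phi metric_xx // mulr0 subr0; apply/orP; right; lra.
apply: (subsolution_max_lipschitz (L := L) (c := U x0 / 2)) => //.
- exact: divr_gt0.
- move=> x y; rewrite /phi.
  by have := ler_wpM2l L0 (metric_triangle dm x0 x y); rewrite mulrDr; lra.
- move=> y /[dup] /bump_near; rewrite lt_min => /andP[/l_near ly /U_near Uy] Uphi.
  split; last lra.
  have : lam * phi y <= lam * (U x0 + del).
    apply: ler_wpM2l => //; rewrite /phi.
    by have := mulr_ge0 L0 (metric_ge0 dm x0 y); lra.
  rewrite /L mulrDr; lra.
Qed.

Lemma subsolution_ge0 (l z : T -> R) x : is_subsolution l z -> 0 <= z x.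
Proof. by case/is_subsolutionP=> _ + _ _; apply. Qed.

Variable D : R.
Hypothesis hD : forall x y, d x y <= D.

Lemma subsolution_le_data (l z : T -> R) x : is_subsolution l z -> z x <= l x * D.
Proof.
case/is_subsolutionP=> _ z0 zsmall /(_ x)[lz hz].
apply/ler_addgt0Pr => e e0; have [y zy] := zsmall e e0.
have := hz y; have := hD x y; have := metric_ge0 dm x y; have := z0 x.
have := hD x x; rewrite (metric_xx dm) => D0 zx dxy dD hzxy.
have : 0 <= (l x - lam * z x) * (D - d x y) by apply: mulr_ge0; lra.
have : 0 <= lam * z x * D by rewrite !mulr_ge0.
nra.
Qed.

Lemma subsolution_eq0 (l z : T -> R) x : D <= 0 -> is_subsolution l z -> z x = 0.
Proof.
move=> D_le0 hz; have z0 := subsolution_ge0 x hz.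
have [_ _ _ /(_ x)[lz _]] := (is_subsolutionP l z).1 hz.
have := mulr_ge0_le0 (le_trans (mulr_ge0 lam0 z0) lz) D_le0.
by have := subsolution_le_data x hz; lra.
Qed.

Section PerronEnvelope.
Variables (l u0 : T -> R).
Hypotheses (lscl : lsc d l) (linf : einf l = 0%E).
Hypothesis hu0 : is_solution d lam l u0.

Definition perron_sup (x : T) : R := sup [set z x | z in is_subsolution l].

Lemma has_sup_subsolutions x : has_sup [set z x | z in is_subsolution l].
Proof.
split; first by exists (u0 x), u0 => //; exact: solution_is_subsolution.
by exists (l x * D) => _ [z hz <-]; exact: subsolution_le_data.
Qed.

Lemma le_perron_sup z x : is_subsolution l z -> z x <= perron_sup x.
Proof. by move=> hz; apply: sup_upper_bound (has_sup_subsolutions x) _ _; exists z. Qed.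

Lemma perron_sup_adherent x (e : R) : 0 < e ->
  exists2 z, is_subsolution l z & perron_sup x - e < z x.
Proof.
by move=> e0; have [_ [z hz <-]] := sup_adherent e0 (has_sup_subsolutions x); exists z.
Qed.

Lemma perron_sup_mul_le x (a b : R) : 0 <= a ->
  (forall z, is_subsolution l z -> z x * a <= b) -> perron_sup x * a <= b.
Proof.
rewrite le_eqVlt => /orP[/eqP <-|a0] hb.
  by have := hb u0 (solution_is_subsolution hu0); rewrite !mulr0.
rewrite -ler_pdivlMr //; apply: ge_sup.
  by exists (u0 x), u0 => //; exact: solution_is_subsolution.
by move=> _ [z hz <-]; rewrite ler_pdivlMr //; exact: hb.
Qed.

Lemma perron_sup_subsolution : is_subsolution l perron_sup.
Proof.
have le_data x : perron_sup x <= l x * D.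
  rewrite -[perron_sup x]mulr1; apply: perron_sup_mul_le => // z hz.
  by rewrite mulr1; exact: subsolution_le_data.
have [l0 lsmall] := (einf0P l).1 linf.
apply/is_subsolutionP; split=> [x e e0|x|e e0|x].
- have [z hz zx] := perron_sup_adherent x (divr_gt0 e0 (ltr0Sn _ 1)).
  have [r r0 hr] := hz.1 x (e / 2) (divr_gt0 e0 (ltr0Sn _ 1)).
  by exists r => // y /hr zy; have := le_perron_sup y hz; lra.
- have hu := solution_is_subsolution hu0.
  exact: le_trans (subsolution_ge0 x hu) (le_perron_sup x hu).
- have D1 : 0 < `|D| + 1 by rewrite ltr_wpDl ?normr_ge0.
  have [y] := lsmall (e / (`|D| + 1)) (divr_gt0 e0 D1).
  rewrite ltr_pdivlMr // => ly; exists y; apply: le_lt_trans (le_data y) _.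
  have : l y * D <= l y * `|D| by rewrite ler_wpM2l ?ler_norm.
  have := l0 y; nra.
- split.
    rewrite mulrC; apply: perron_sup_mul_le => // z /is_subsolutionP[_ _ _ /(_ x)[+ _]].
    by rewrite mulrC.
  move=> y; have dxy := metric_ge0 dm x y; have lamd := mulr_ge0 lam0 dxy.
  (* The slope inequality is affine in [z x], hence passes to the supremum. *)
  suff : perron_sup x * (1 + lam * d x y) <= perron_sup y + l x * d x y by nra.
  apply: perron_sup_mul_le => [|z hz]; first lra.
  have := le_perron_sup y hz; case/is_subsolutionP: hz => _ _ _ /(_ x)[_ /(_ y)].
  nra.
Qed.

Lemma perron_sup_solution : is_solution d lam l perron_sup.
Proof.
have hU := perron_sup_subsolution; case: (hU) => lU [Uinf _].
split=> //; split=> // x.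
have [_ U0 _ /(_ x)[lUx hUx]] := (is_subsolutionP l perron_sup).1 hU.
have Gle : (global_slope d perron_sup x <= (l x - lam * perron_sup x)%:E)%E.
  by apply/(global_slope_leP dm) => //; lra.
suff Gge : ((l x - lam * perron_sup x)%:E <= global_slope d perron_sup x)%E.
  have -> : global_slope d perron_sup x = (l x - lam * perron_sup x)%:E.
    by apply/le_anti; rewrite Gle Gge.
  by rewrite -EFinD addrCA subrr addr0.
rewrite leNgt; apply/negP; have := global_slope_ge0 d perron_sup x.
have := global_slope_leP dm perron_sup x.
case: (global_slope d perron_sup x) => [g| |] //= slopeP.
rewrite lee_fin lte_fin => g0 gl.
have /slopeP hg : (g%:E <= g%:E)%E by [].
case: (ltP 0 (perron_sup x)) => [Ux_gt0|Ux_le0].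
  have gl' : g + lam * perron_sup x < l x by lra.
  have [Z hZ UZ] := subsolution_bump lscl hU Ux_gt0 g0 (hg g0) gl'.
  by have := le_perron_sup x hZ; lra.
have Ux0 : perron_sup x = 0 by apply/le_anti; rewrite Ux_le0 U0.
have u0x : u0 x = 0.
  have hu := solution_is_subsolution hu0.
  by apply/le_anti; rewrite -{1}Ux0 le_perron_sup // (subsolution_ge0 _ hu).
by move: gl; rewrite (solution_data_eq0 hu0 u0x) Ux0 mulr0; lra.
Qed.

End PerronEnvelope.

Lemma perron_solution_ge_subsolution (l u w : T -> R) : lsc d l -> einf l = 0%E ->
  is_perron_solution d lam l u -> is_subsolution l w -> forall x, w x <= u x.
Proof.
move=> lscl linf [hu umax] hw x.
exact: le_trans (le_perron_sup hu x hw) (umax _ (perron_sup_solution lscl linf hu) x).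
Qed.

Lemma rescaled_subsolution (k l v : T -> R) (rho m : R) : 0 < rho -> 0 <= m ->
  (forall x, 0 <= l x) -> (forall x, k x - l x <= m) -> is_subsolution k v ->
  is_subsolution l (fun y => Num.max 0 (rho / (rho + m) * v y - rho * D)).
Proof.
move=> rho0 m0 l0 klm hv; have a0 : 0 < rho / (rho + m) by rewrite divr_gt0 ?ltr_wpDr.
have [lv _ vsmall hvx] := (is_subsolutionP k v).1 hv.
apply/is_subsolutionP; split=> [|y|e e0|x].
- apply: lsc_max (lipschitz_lsc dm (lexx 0) _) (lsc_affine _ a0 lv).
  by move=> *; rewrite subrr mul0r.
- by rewrite le_max lexx.
- have [y] := vsmall _ (divr_gt0 e0 a0); rewrite ltr_pdivlMr // mulrC => vy.
  have D0 : 0 <= D by have := hD y y; rewrite (metric_xx dm).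
  by exists y; rewrite gt_max e0 /=; have := mulr_ge0 (ltW rho0) D0; lra.
- apply: subsolution_at_max => [_|pos].
    split=> [|y]; first by rewrite mulr0.
    by rewrite subrr mulr0 subr0 mulr_ge0 ?metric_ge0.
  have D0 : 0 <= D by have := hD x x; rewrite (metric_xx dm).
  apply: subsolution_at_scale (hvx x) => //; first by rewrite mulr_ge0 // ltW.
  by apply: rescaled_data_le (klm x) (subsolution_le_data x hv) _ => //; lra.
Qed.

Lemma perron_solution_stability (l k u v : T -> R) (rho m : R) x :
  lsc d l -> einf l = 0%E -> (forall y, 0 <= l y) -> (forall y, k y - l y <= m) ->
  is_perron_solution d lam l u -> is_subsolution k v -> 0 < rho -> 0 <= m ->
  v x - u x <= (rho + m) * D + m * (u x / rho).
Proof.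
move=> lscl linf l0 klm hu hv rho0 m0; have rm : 0 < rho + m by lra.
have hw := rescaled_subsolution rho0 m0 l0 klm hv.
have := perron_solution_ge_subsolution lscl linf hu hw x.
rewrite ge_max => /andP[_ /(ler_wpM2r (ltW rm))].
rewrite mulrBl mulrAC mulfVK ?gt_eqF // => hvu.
have uK : u x / rho * rho = u x by rewrite mulfVK ?gt_eqF.
rewrite -(ler_pM2r rho0); nra.
Qed.

End Subsolutions.

Lemma ereal_sup_EFin_image (R : realType) (I : Type) (F : I -> R) (i : I) :
  (ereal_sup [set (F j)%:E | j in [set: I]] < +oo)%E ->
  exists2 M, ereal_sup [set (F j)%:E | j in [set: I]] = M%:E & forall j, F j <= M.
Proof.
have ub j : ((F j)%:E <= ereal_sup [set (F j)%:E | j in [set: I]])%E.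
  by apply: ereal_sup_ubound; exists j.
move: ub; case: (ereal_sup _) => [M| |] // ub _; last by have := ub i.
by exists M => // j; rewrite -lee_fin.
Qed.

Lemma diam_EFin (R : realType) (T : Type) (d : T -> T -> R) (x : T) :
  (diam d < +oo)%E -> exists2 D, diam d = D%:E & forall y z, d y z <= D.
Proof.
move=> /(ereal_sup_EFin_image (F := fun p : T * T => d p.1 p.2) (x, x))[D DE hD].
by exists D => // y z; exact: (hD (y, z)).
Qed.

Lemma sup_norm_EFin (R : realType) (T : Type) (f : T -> R) (x : T) :
  (sup_norm f < +oo)%E -> exists2 m, sup_norm f = m%:E & forall y, `|f y| <= m.
Proof. exact: ereal_sup_EFin_image. Qed.

Theorem lemma5p3 (R : realType) (T : Type) (d : T -> T -> R)
  (lam : R) (l k u v : T -> R) :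
  is_metric d ->
  (diam d < +oo)%E ->
  0 <= lam ->
  (forall x, 0 <= l x) -> (forall x, 0 <= k x) ->
  lsc d l -> lsc d k ->
  einf l = 0%E -> einf k = 0%E ->
  is_perron_solution d lam l u ->
  is_perron_solution d lam k v ->
  forall rho : R, 0 < rho ->
  forall x : T,
    ((v x - u x)%R%:E <=
      (rho%:E + sup_norm (fun y => (k y - l y)%R)) * diam d
      + sup_norm (fun y => (k y - l y)%R) * (u x / rho)%R%:E)%E.
Proof.
move=> dm hdiam lam0 l0 _ lscl _ linf _ hu hv rho rho0 x.
have [D diamE hD] := diam_EFin x hdiam.
have hu' := solution_is_subsolution hu.1; have hv' := solution_is_subsolution hv.1.
have [->|] := eqVneq (sup_norm (fun y => k y - l y)) +oo%E; last first.
  rewrite -ltey => /(sup_norm_EFin x)[m -> hm].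
  rewrite diamE -EFinD lee_fin.
  apply: (perron_solution_stability dm lam0 hD x lscl linf l0 _ hu hv' rho0).
    by move=> y; exact: ler_normlW.
  exact: le_trans (normr_ge0 _) (hm x).
(* An infinite norm makes the bound +oo unless D = 0, where every subsolution
   vanishes and +oo * 0 = 0. *)
rewrite diamE; have [D_gt0|D_le0] := ltP 0 D.
  rewrite addey // gt0_mulye ?lte_fin // addye ?leey // -ltNye.
  apply: lt_le_trans ltNy0 _; rewrite mule_ge0 // lee_fin divr_ge0 ?(ltW rho0) //.
  by have := subsolution_ge0 dm x hu'.
have D_eq0 : D = 0 by apply/le_anti; rewrite D_le0 -(metric_xx dm x) hD.
have vanish := subsolution_eq0 dm lam0 hD x D_le0.
by rewrite (vanish _ _ hu') (vanish _ _ hv') D_eq0 subrr mul0r !mule0 adde0.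
Qed.
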